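(* Let $M\in\mathbb{R}^{p\times q}_+$ be a nonnegative matrix with $\operatorname{rank}_{\mathrm{psd}}(M)=2$ and $\operatorname{rank}(M)=3$. Then the quotient space $\mathcal{SF}(M)/GL(2)$ is connected. *)

From Stdlib Require Import Reals List.
Open Scope R_scope.

Fixpoint fsum (n : nat) (f : nat -> R) : R :=
  match n with O => 0 | S n' => fsum n' f + f n' end.

(* A k x k real matrix is represented by its entries A a b for a, b < k. *)
Definition kmat := nat -> nat -> R.

Definition psd_k (k : nat) (A : kmat) : Prop :=
  (forall a b, (a < k)%nat -> (b < k)%nat -> A a b = A b a) /\
  (forall x : nat -> R, 0 <= fsum k (fun a => fsum k (fun b => x a * A a b * x b))).

Definition kinner (k : nat) (A B : kmat) : R :=
  fsum k (fun a => fsum k (fun b => A a b * B b a)).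

Definition nonneg_mat (p q : nat) (M : nat -> nat -> R) : Prop :=
  forall i j, (i < p)%nat -> (j < q)%nat -> 0 <= M i j.

Definition has_psd_fact (p q : nat) (M : nat -> nat -> R) (k : nat) : Prop :=
  exists (A B : nat -> kmat),
    (forall i, (i < p)%nat -> psd_k k (A i)) /\
    (forall j, (j < q)%nat -> psd_k k (B j)) /\
    (forall i j, (i < p)%nat -> (j < q)%nat -> M i j = kinner k (A i) (B j)).

Definition psd_rank_eq (p q : nat) (M : nat -> nat -> R) (r : nat) : Prop :=
  has_psd_fact p q M r /\ (forall k, (k < r)%nat -> ~ has_psd_fact p q M k).

Definition cols_indep (p : nat) (M : nat -> nat -> R) (js : list nat) : Prop :=
  forall c : nat -> R,
    (forall i, (i < p)%nat ->
       fsum (length js) (fun t => c t * M i (nth t js O)) = 0) ->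
    forall t, (t < length js)%nat -> c t = 0.

Definition rank_eq (p q : nat) (M : nat -> nat -> R) (r : nat) : Prop :=
  (exists js, length js = r /\ Forall (fun j => (j < q)%nat) js /\ cols_indep p M js) /\
  (forall js, length js = S r -> Forall (fun j => (j < q)%nat) js -> ~ cols_indep p M js).

Record Mat2 := mk2 { e11 : R; e12 : R; e21 : R; e22 : R }.

Definition mul2 (X Y : Mat2) : Mat2 :=
  mk2 (e11 X * e11 Y + e12 X * e21 Y) (e11 X * e12 Y + e12 X * e22 Y)
      (e21 X * e11 Y + e22 X * e21 Y) (e21 X * e12 Y + e22 X * e22 Y).
Definition tr2 (X : Mat2) : Mat2 := mk2 (e11 X) (e21 X) (e12 X) (e22 X).
Definition det2 (X : Mat2) : R := e11 X * e22 X - e12 X * e21 X.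
Definition inv2 (X : Mat2) : Mat2 :=
  mk2 (e22 X / det2 X) (- e12 X / det2 X) (- e21 X / det2 X) (e11 X / det2 X).
Definition zero2 : Mat2 := mk2 0 0 0 0.
Definition trace2 (X : Mat2) : R := e11 X + e22 X.

Definition psd2 (X : Mat2) : Prop :=
  e12 X = e21 X /\
  forall x y : R, 0 <= x * (e11 X * x + e12 X * y) + y * (e21 X * x + e22 X * y).

Definition inner2 (X Y : Mat2) : R := trace2 (mul2 X Y).

(* A point is a pair (A, B) of families of 2x2 matrices A_1..A_p, B_1..B_q;
   entries with index >= p (resp. >= q) are required to be 0 so that a point
   is exactly an element of (S^2)^(p+q). *)
Definition fact2 : Type := ((nat -> Mat2) * (nat -> Mat2))%type.

Definition SF (p q : nat) (M : nat -> nat -> R) (P : fact2) : Prop :=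
  let (A, B) := P in
  (forall i, (i < p)%nat -> psd2 (A i)) /\
  (forall j, (j < q)%nat -> psd2 (B j)) /\
  (forall i, (p <= i)%nat -> A i = zero2) /\
  (forall j, (q <= j)%nat -> B j = zero2) /\
  (forall i j, (i < p)%nat -> (j < q)%nat -> M i j = inner2 (A i) (B j)).

Definition GL2 (g : Mat2) : Prop := det2 g <> 0.
Definition act (g : Mat2) (P : fact2) : fact2 :=
  (fun i => mul2 (tr2 g) (mul2 (fst P i) g),
   fun j => mul2 (inv2 g) (mul2 (snd P j) (tr2 (inv2 g)))).

(* Euclidean topology on (S^2)^(p+q) via the l1 distance on entries *)
Definition mdist2 (X Y : Mat2) : R :=
  Rabs (e11 X - e11 Y) + Rabs (e12 X - e12 Y) + Rabs (e21 X - e21 Y) + Rabs (e22 X - e22 Y).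
Definition fdist (p q : nat) (P Q : fact2) : R :=
  fsum p (fun i => mdist2 (fst P i) (fst Q i)) + fsum q (fun j => mdist2 (snd P j) (snd Q j)).

Definition rel_open (p q : nat) (X U : fact2 -> Prop) : Prop :=
  forall P, X P -> U P ->
    exists eps, 0 < eps /\ forall Q, X Q -> fdist p q P Q < eps -> U Q.

Definition GL2_invariant (U : fact2 -> Prop) : Prop :=
  forall g P, GL2 g -> U P -> U (act g P).

(* X/GL(2) is connected (quotient topology): the open sets of X/GL(2) are the
   images of the GL(2)-invariant relatively open subsets of X, so connectedness
   means X is not the disjoint union of two nonempty invariant open subsets. *)
Definition quotient_GL2_connected (p q : nat) (X : fact2 -> Prop) : Prop :=
  ~ exists U V : fact2 -> Prop,
      rel_open p q X U /\ rel_open p q X V /\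
      GL2_invariant U /\ GL2_invariant V /\
      (exists P, X P /\ U P) /\ (exists P, X P /\ V P) /\
      (forall P, X P -> U P \/ V P) /\
      (forall P, X P -> U P -> V P -> False).

(* Identify the symmetric matrix [[x0 + x1, x2], [x2, x0 - x1]] with (x0, x1, x2); the psd
   cone becomes the Lorentz cone and <X, Y> = 2 x.y.  Since rank M = 3, the factors A_i (and
   the B_j) of any factorization span R^3, so two factorizations differ by an invertible
   linear map: A'_i = F^T A_i and B_j = F B'_j.  Acting by GL(2) we may assume sum A_i = I;
   then F^T fixes e0, i.e. F^T (x0, y) = (x0 + a.y, N y).  With R_t the positive square root
   of S_t = (1 - t) I + t N^T N - t (1 - t) a a^T, the maps phi_t (x0, y) = (x0 + t a.y, R_t y)
   and their inverse adjoints psi_t preserve all inner products, and an identity affine in t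
   shows that they keep the A_i and B_j in the cone; S_t stays definite because the B_j
   span.  Hence t |-> (phi_t A, psi_t B) is a path in SF(M) from (A, B) to (A', B') twisted
   by the orthogonal matrix R_1 N^-1, which is realized by a congruence.  So any point of
   SF(M) is joined by a path to any GL(2)-orbit, and SF(M)/GL(2) is connected. *)

From Stdlib Require Import Reals List Lra Lia Psatz FunctionalExtensionality Classical.
Open Scope R_scope.

Lemma fsum_ext n f g : (forall i, (i < n)%nat -> f i = g i) -> fsum n f = fsum n g.
Proof.
  induction n as [|n IH]; intros Hfg; simpl; [reflexivity|].
  rewrite IH by (intros; apply Hfg; lia).
  rewrite Hfg by lia; reflexivity.
Qed.

Lemma fsum_const0 n : fsum n (fun _ => 0) = 0.
Proof. induction n; simpl; lra. Qed.

Lemma fsum_ge0 n f : (forall i, (i < n)%nat -> 0 <= f i) -> 0 <= fsum n f.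
Proof.
  induction n as [|n IH]; intros Hf; simpl; [lra|].
  assert (0 <= fsum n f) by (apply IH; intros; apply Hf; lia).
  assert (0 <= f n) by (apply Hf; lia).
  lra.
Qed.

Lemma fsum_ge0_eq0 n f : (forall i, (i < n)%nat -> 0 <= f i) -> fsum n f = 0 ->
  forall i, (i < n)%nat -> f i = 0.
Proof.
  induction n as [|n IH]; simpl; intros Hf Hsum i Hi; [lia|].
  assert (0 <= fsum n f) by (apply fsum_ge0; intros; apply Hf; lia).
  assert (0 <= f n) by (apply Hf; lia).
  destruct (Nat.eq_dec i n) as [->|Hin]; [lra|].
  apply IH; [intros; apply Hf; lia | lra | lia].
Qed.

Lemma Cauchy_Schwarz2 z1 z2 y1 y2 :
  (z1 * y1 + z2 * y2) * (z1 * y1 + z2 * y2) <= (z1 * z1 + z2 * z2) * (y1 * y1 + y2 * y2).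
Proof. pose proof (pow2_ge_0 (z1 * y2 - z2 * y1)). nra. Qed.

(** * The Lorentz cone model of 2x2 psd matrices *)

Record V3 := v3 { x0 : R; x1 : R; x2 : R }.

Definition dot3 (a b : V3) : R := x0 a * x0 b + x1 a * x1 b + x2 a * x2 b.
Definition vadd (a b : V3) : V3 := v3 (x0 a + x0 b) (x1 a + x1 b) (x2 a + x2 b).
Definition vzero : V3 := v3 0 0 0.
Definition e0 : V3 := v3 1 0 0.
Definition vsum (n : nat) (f : nat -> V3) : V3 :=
  v3 (fsum n (fun i => x0 (f i))) (fsum n (fun i => x1 (f i))) (fsum n (fun i => x2 (f i))).

Definition lorentz (a : V3) : Prop :=
  0 <= x0 a /\ x1 a * x1 a + x2 a * x2 a <= x0 a * x0 a.

Lemma V3_eq a b : x0 a = x0 b -> x1 a = x1 b -> x2 a = x2 b -> a = b.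
Proof. destruct a, b; simpl; intros; subst; reflexivity. Qed.

Lemma vsum_S n f : vsum (S n) f = vadd (vsum n f) (f n).
Proof. reflexivity. Qed.

Lemma vsum_ext n f g : (forall i, (i < n)%nat -> f i = g i) -> vsum n f = vsum n g.
Proof. intros Hfg; apply V3_eq; simpl; apply fsum_ext; intros; rewrite Hfg; auto. Qed.

Lemma vsum_additive (L : V3 -> V3) n f :
  L vzero = vzero -> (forall a b, L (vadd a b) = vadd (L a) (L b)) ->
  L (vsum n f) = vsum n (fun i => L (f i)).
Proof.
  intros L0 LD; induction n as [|n IH]; [exact L0|].
  rewrite !vsum_S, LD, IH; reflexivity.
Qed.

Lemma dot3_comm a b : dot3 a b = dot3 b a.
Proof. unfold dot3; ring. Qed.

Lemma dot3_vsum n a f : dot3 a (vsum n f) = fsum n (fun i => dot3 a (f i)).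
Proof.
  induction n as [|n IH]; simpl; [unfold dot3; simpl; ring|].
  rewrite <- IH; unfold dot3, vsum; simpl; ring.
Qed.

Lemma lorentz_cross a b : lorentz a -> lorentz b ->
  x1 a * x1 b + x2 a * x2 b <= x0 a * x0 b.
Proof.
  intros [Ha0 Ha] [Hb0 Hb].
  pose proof (Cauchy_Schwarz2 (x1 a) (x2 a) (x1 b) (x2 b)).
  assert ((x1 a * x1 a + x2 a * x2 a) * (x1 b * x1 b + x2 b * x2 b)
          <= (x0 a * x0 a) * (x0 b * x0 b)) by (apply Rmult_le_compat; nra).
  assert (0 <= x0 a * x0 b) by nra.
  nra.
Qed.

Lemma lorentz_dot_ge0 a b : lorentz a -> lorentz b -> 0 <= dot3 a b.
Proof.
  intros Ha [Hb0 Hb].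
  assert (Hb' : lorentz (v3 (x0 b) (- x1 b) (- x2 b))) by (split; simpl; nra).
  pose proof (lorentz_cross a _ Ha Hb'); unfold dot3; simpl in *; lra.
Qed.

Lemma lorentz_add a b : lorentz a -> lorentz b -> lorentz (vadd a b).
Proof.
  intros Ha Hb; pose proof (lorentz_cross a b Ha Hb).
  unfold lorentz in *; simpl; destruct Ha, Hb; split; nra.
Qed.

Lemma lorentz_vsum n f : (forall i, (i < n)%nat -> lorentz (f i)) -> lorentz (vsum n f).
Proof.
  induction n as [|n IH]; intros Hf.
  - unfold lorentz; simpl; lra.
  - rewrite vsum_S; apply lorentz_add; [apply IH; intros|]; apply Hf; lia.
Qed.

Lemma lorentz_dot_bound b y1 y2 : lorentz b ->
  (x1 b * y1 + x2 b * y2) * (x1 b * y1 + x2 b * y2) <= x0 b * x0 b * (y1 * y1 + y2 * y2).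
Proof.
  intros [_ Hb]; pose proof (Cauchy_Schwarz2 (x1 b) (x2 b) y1 y2).
  assert ((x1 b * x1 b + x2 b * x2 b) * (y1 * y1 + y2 * y2) <= x0 b * x0 b * (y1 * y1 + y2 * y2))
    by (apply Rmult_le_compat_r; nra).
  lra.
Qed.

Definition vec_of_sym (X : Mat2) : V3 := v3 ((e11 X + e22 X) / 2) ((e11 X - e22 X) / 2) (e12 X).
Definition sym_of_vec (x : V3) : Mat2 := mk2 (x0 x + x1 x) (x2 x) (x2 x) (x0 x - x1 x).

Lemma Mat2_eq X Y : e11 X = e11 Y -> e12 X = e12 Y -> e21 X = e21 Y -> e22 X = e22 Y -> X = Y.
Proof. destruct X, Y; simpl; intros; subst; reflexivity. Qed.

Lemma sym_of_vecK X : e12 X = e21 X -> sym_of_vec (vec_of_sym X) = X.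
Proof. intros; apply Mat2_eq; unfold sym_of_vec, vec_of_sym; simpl; lra. Qed.

Lemma inner2_sym_of_vec x y : inner2 (sym_of_vec x) (sym_of_vec y) = 2 * dot3 x y.
Proof. unfold inner2, trace2, mul2, sym_of_vec, dot3; simpl; ring. Qed.

Lemma psd2_sym X : psd2 X -> e12 X = e21 X.
Proof. intros [H _]; exact H. Qed.

Lemma inner2_psd2 X Y : psd2 X -> psd2 Y -> inner2 X Y = 2 * dot3 (vec_of_sym X) (vec_of_sym Y).
Proof.
  intros HX HY; rewrite <- inner2_sym_of_vec.
  rewrite !sym_of_vecK by (apply psd2_sym; assumption); reflexivity.
Qed.

Lemma psd2_sym_of_vec x : psd2 (sym_of_vec x) <-> lorentz x.
Proof.
  destruct x as [u v w]; unfold psd2, lorentz, sym_of_vec; simpl; split.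
  - intros [_ H].
    pose proof (H 1 0); pose proof (H 0 1).
    assert (u0 : 0 <= u) by nra; split; [exact u0|].
    destruct (Req_dec (u + v) 0).
    + destruct (Req_dec (u - v) 0).
      * assert (u = 0) by lra; assert (v = 0) by lra; subst.
        pose proof (H 1 w); pose proof (H 1 (- w)); nra.
      * pose proof (H (-(u - v)) w); nra.
    + pose proof (H w (-(u + v))); nra.
  - intros [Hu Huvw]; split; [reflexivity|]; intros a b.
    assert (0 <= u + v) by nra.
    destruct (Req_dec (u + v) 0).
    + assert (w = 0) by nra; subst w.
      assert (0 <= u - v) by nra; nra.
    + assert (0 <= (u + v) * ((u + v) * a * a + 2 * w * a * b + (u - v) * b * b)).
      { replace ((u + v) * ((u + v) * a * a + 2 * w * a * b + (u - v) * b * b))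
          with (((u + v) * a + w * b) ^ 2 + (u * u - v * v - w * w) * (b * b)) by ring.
        pose proof (pow2_ge_0 ((u + v) * a + w * b)).
        assert (0 <= (u * u - v * v - w * w) * (b * b)) by (apply Rmult_le_pos; nra).
        lra. }
      assert (0 <= (u + v) * a * a + 2 * w * a * b + (u - v) * b * b)
        by (apply (Rmult_le_reg_l (u + v)); lra).
      nra.
Qed.

Lemma psd2_lorentz X : psd2 X -> lorentz (vec_of_sym X).
Proof.
  intros H; apply psd2_sym_of_vec; rewrite sym_of_vecK; [exact H | apply psd2_sym, H].
Qed.

Lemma SF_entry p q M A B i j : SF p q M (A, B) -> (i < p)%nat -> (j < q)%nat ->
  M i j = 2 * dot3 (vec_of_sym (A i)) (vec_of_sym (B j)).
Proof.
  intros (HA & HB & _ & _ & HM) Hi Hj.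
  rewrite HM by assumption; apply inner2_psd2; auto.
Qed.

(** * The GL(2) action *)

Lemma psd2_congr X h : psd2 X -> psd2 (mul2 (tr2 h) (mul2 X h)).
Proof.
  intros [Hs H]; split.
  - unfold mul2, tr2; simpl; rewrite Hs; ring.
  - intros x y; specialize (H (e11 h * x + e12 h * y) (e21 h * x + e22 h * y)).
    unfold mul2, tr2; simpl; rewrite Hs in *.
    match goal with |- 0 <= ?E => replace E with
      ((e11 h * x + e12 h * y) * (e11 X * (e11 h * x + e12 h * y) + e21 X * (e21 h * x + e22 h * y)) +
       (e21 h * x + e22 h * y) * (e21 X * (e11 h * x + e12 h * y) + e22 X * (e21 h * x + e22 h * y)))
      by ring end.
    exact H.
Qed.

Lemma tr2K X : tr2 (tr2 X) = X.
Proof. apply Mat2_eq; reflexivity. Qed.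

Lemma inner2_act g X Y : GL2 g ->
  inner2 (mul2 (tr2 g) (mul2 X g)) (mul2 (inv2 g) (mul2 Y (tr2 (inv2 g)))) = inner2 X Y.
Proof.
  unfold GL2; intros Hg.
  unfold inner2, trace2, mul2, tr2, inv2, det2 in *; simpl; field; exact Hg.
Qed.

Lemma SF_act p q M g P : GL2 g -> SF p q M P -> SF p q M (act g P).
Proof.
  destruct P as [A B]; unfold SF, act; simpl.
  intros Hg (HA & HB & HA0 & HB0 & HM); split; [|split; [|split; [|split]]].
  - intros i Hi; apply psd2_congr; auto.
  - intros j Hj; rewrite <- (tr2K (inv2 g)) at 1; apply psd2_congr; auto.
  - intros i Hi; rewrite HA0 by assumption; apply Mat2_eq; simpl; ring.
  - intros j Hj; rewrite HB0 by assumption; apply Mat2_eq; simpl; ring.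
  - intros i j Hi Hj; rewrite inner2_act; auto.
Qed.

(** * Linear algebra in R^3 *)

Record M3 := m3 { col0 : V3; col1 : V3; col2 : V3 }.

Definition mv3 (B : M3) (c : V3) : V3 :=
  v3 (x0 c * x0 (col0 B) + x1 c * x0 (col1 B) + x2 c * x0 (col2 B))
     (x0 c * x1 (col0 B) + x1 c * x1 (col1 B) + x2 c * x1 (col2 B))
     (x0 c * x2 (col0 B) + x1 c * x2 (col1 B) + x2 c * x2 (col2 B)).
Definition mtv3 (B : M3) (y : V3) : V3 := v3 (dot3 (col0 B) y) (dot3 (col1 B) y) (dot3 (col2 B) y).

Definition cross (a b : V3) : V3 :=
  v3 (x1 a * x2 b - x2 a * x1 b) (x2 a * x0 b - x0 a * x2 b) (x0 a * x1 b - x1 a * x0 b).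
Definition det3 (B : M3) : R := dot3 (col0 B) (cross (col1 B) (col2 B)).
(* Cramer's rule *)
Definition solve3 (B : M3) (X : V3) : V3 :=
  let d := det3 B in
  v3 (dot3 (cross (col1 B) (col2 B)) X / d) (dot3 (cross (col2 B) (col0 B)) X / d)
     (dot3 (cross (col0 B) (col1 B)) X / d).

Lemma dot3_mtv3 B x y : dot3 (mtv3 B x) y = dot3 x (mv3 B y).
Proof. unfold mtv3, mv3, dot3; simpl; ring. Qed.

Lemma mtv3_add B a b : mtv3 B (vadd a b) = vadd (mtv3 B a) (mtv3 B b).
Proof. apply V3_eq; unfold mtv3, vadd, dot3; simpl; ring. Qed.

Lemma mv3_zero B : mv3 B vzero = vzero.
Proof. apply V3_eq; unfold mv3; simpl; ring. Qed.

Lemma mtv3_zero B : mtv3 B vzero = vzero.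
Proof. apply V3_eq; unfold mtv3, dot3; simpl; ring. Qed.

Lemma mv3_solve3 B X : det3 B <> 0 -> mv3 B (solve3 B X) = X.
Proof.
  destruct B as [[a0 a1 a2] [b0 b1 b2] [c0 c1 c2]], X as [y0 y1 y2].
  unfold solve3, mv3, det3, cross, dot3; simpl; intros H.
  apply V3_eq; simpl; field; exact H.
Qed.

Lemma solve3_mv3 B c : det3 B <> 0 -> solve3 B (mv3 B c) = c.
Proof.
  destruct B as [[a0 a1 a2] [b0 b1 b2] [c0 c1 c2]], c as [y0 y1 y2].
  unfold solve3, mv3, det3, cross, dot3; simpl; intros H.
  apply V3_eq; simpl; field; exact H.
Qed.

Lemma mtv3_inj B x y : det3 B <> 0 -> mtv3 B x = mtv3 B y -> x = y.
Proof.
  intros Hdet Hxy.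
  assert (Hdot : forall X, dot3 x X = dot3 y X).
  { intros X; rewrite <- (mv3_solve3 B X Hdet), <- !dot3_mtv3, Hxy; reflexivity. }
  pose proof (Hdot (v3 1 0 0)); pose proof (Hdot (v3 0 1 0)); pose proof (Hdot (v3 0 0 1)).
  unfold dot3 in *; simpl in *; apply V3_eq; lra.
Qed.

(* The rows of the adjugate are in the kernel; if they all vanish, the columns are
   pairwise parallel. *)
Lemma det3_eq0_kernel B : det3 B = 0 -> exists c, c <> vzero /\ mv3 B c = vzero.
Proof.
  intros Hdet.
  assert (Hwit : forall k, (x0 k <> 0 \/ x1 k <> 0 \/ x2 k <> 0) -> mv3 B k = vzero ->
                   exists c, c <> vzero /\ mv3 B c = vzero)
    by (intros k Hk Hker; exists k; split; [intros ->; simpl in Hk; lra | exact Hker]).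
  destruct B as [[a0 a1 a2] [b0 b1 b2] [c0 c1 c2]]; unfold det3, cross, dot3 in Hdet; simpl in Hdet.
  set (u0 := b1 * c2 - b2 * c1); set (u1 := b2 * c0 - b0 * c2); set (u2 := b0 * c1 - b1 * c0).
  set (v0 := c1 * a2 - c2 * a1); set (v1 := c2 * a0 - c0 * a2); set (v2 := c0 * a1 - c1 * a0).
  set (w0 := a1 * b2 - a2 * b1); set (w1 := a2 * b0 - a0 * b2); set (w2 := a0 * b1 - a1 * b0).
  destruct (Req_dec u0 0); [destruct (Req_dec v0 0); [destruct (Req_dec w0 0)|]|].
  2,3,4: apply (Hwit (v3 u0 v0 w0)); [simpl; tauto|];
    apply V3_eq; unfold mv3; simpl; unfold u0, v0, w0 in *; nra.
  destruct (Req_dec u1 0); [destruct (Req_dec v1 0); [destruct (Req_dec w1 0)|]|].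
  2,3,4: apply (Hwit (v3 u1 v1 w1)); [simpl; tauto|];
    apply V3_eq; unfold mv3; simpl; unfold u1, v1, w1 in *; nra.
  destruct (Req_dec u2 0); [destruct (Req_dec v2 0); [destruct (Req_dec w2 0)|]|].
  2,3,4: apply (Hwit (v3 u2 v2 w2)); [simpl; tauto|];
    apply V3_eq; unfold mv3; simpl; unfold u2, v2, w2 in *; nra.
  unfold u0, u1, u2, v0, v1, v2, w0, w1, w2 in *.
  destruct (Req_dec a0 0); [destruct (Req_dec a1 0); [destruct (Req_dec a2 0)|]|].
  - apply (Hwit (v3 1 0 0)); [simpl; lra|]; apply V3_eq; unfold mv3; simpl; subst; ring.
  - apply (Hwit (v3 b2 (- a2) 0)); [simpl; lra|]; apply V3_eq; unfold mv3; simpl; nra.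
  - apply (Hwit (v3 b1 (- a1) 0)); [simpl; lra|]; apply V3_eq; unfold mv3; simpl; nra.
  - apply (Hwit (v3 b0 (- a0) 0)); [simpl; lra|]; apply V3_eq; unfold mv3; simpl; nra.
Qed.

(** * Consequences of rank three *)

Definition spanning3 (n : nat) (f : nat -> V3) : Prop :=
  forall X, (forall i, (i < n)%nat -> dot3 (f i) X = 0) -> X = vzero.

Lemma spanning3_eq n f X Y : spanning3 n f ->
  (forall i, (i < n)%nat -> dot3 (f i) X = dot3 (f i) Y) -> X = Y.
Proof.
  intros Hspan HXY.
  assert (HD : v3 (x0 X - x0 Y) (x1 X - x1 Y) (x2 X - x2 Y) = vzero).
  { apply Hspan; intros i Hi; specialize (HXY i Hi); unfold dot3 in *; simpl; lra. }
  injection HD; intros; apply V3_eq; lra.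
Qed.

Lemma rank3_columns p q M : rank_eq p q M 3 ->
  exists j1 j2 j3, (j1 < q)%nat /\ (j2 < q)%nat /\ (j3 < q)%nat /\
    cols_indep p M (j1 :: j2 :: j3 :: nil).
Proof.
  intros [[js [Hlen [Hjs Hind]]] _].
  destruct js as [|j1 [|j2 [|j3 [|]]]]; simpl in Hlen; try lia.
  inversion Hjs as [|? ? Hj1 Hjs2]; inversion Hjs2 as [|? ? Hj2 Hjs3]; inversion Hjs3 as [|? ? Hj3 _].
  exists j1, j2, j3; auto.
Qed.

Section RankThree.
Variables (p q : nat) (M : nat -> nat -> R) (j1 j2 j3 : nat).
Hypothesis Hind : cols_indep p M (j1 :: j2 :: j3 :: nil).
Hypotheses (Hj1 : (j1 < q)%nat) (Hj2 : (j2 < q)%nat) (Hj3 : (j3 < q)%nat).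

Definition colmat (B : nat -> Mat2) : M3 :=
  m3 (vec_of_sym (B j1)) (vec_of_sym (B j2)) (vec_of_sym (B j3)).

Lemma colmat_kernel A B c : SF p q M (A, B) ->
  (forall i, (i < p)%nat -> dot3 (vec_of_sym (A i)) (mv3 (colmat B) c) = 0) -> c = vzero.
Proof.
  intros HS Horth.
  set (cf := fun t => match t with O => x0 c | S O => x1 c | _ => x2 c end).
  assert (Hcf : forall t, (t < 3)%nat -> cf t = 0).
  { apply Hind; intros i Hi; simpl.
    rewrite !(SF_entry p q M A B) by assumption.
    specialize (Horth i Hi); unfold dot3, mv3, colmat in *; simpl in *; lra. }
  apply V3_eq; [apply (Hcf 0%nat) | apply (Hcf 1%nat) | apply (Hcf 2%nat)]; lia.
Qed.

Lemma det3_colmat A B : SF p q M (A, B) -> det3 (colmat B) <> 0.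
Proof.
  intros HS Hdet; destruct (det3_eq0_kernel _ Hdet) as [c [Hc Hker]].
  apply Hc, (colmat_kernel A B); [exact HS|].
  intros i Hi; rewrite Hker; unfold dot3; simpl; ring.
Qed.

Lemma SF_spanning_A A B : SF p q M (A, B) -> spanning3 p (fun i => vec_of_sym (A i)).
Proof.
  intros HS X HX; pose proof (det3_colmat A B HS) as Hdet.
  rewrite <- (mv3_solve3 _ X Hdet), (colmat_kernel A B (solve3 (colmat B) X) HS).
  - apply mv3_zero.
  - intros i Hi; rewrite mv3_solve3 by exact Hdet; apply HX, Hi.
Qed.

Lemma SF_spanning_B A B : SF p q M (A, B) -> spanning3 q (fun j => vec_of_sym (B j)).
Proof.
  intros HS X HX; apply (mtv3_inj (colmat B)); [exact (det3_colmat A B HS)|].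
  rewrite mtv3_zero; unfold mtv3, colmat; simpl; rewrite !HX by assumption; reflexivity.
Qed.

End RankThree.

(** * Normalizing a factorization *)

Definition congr3 (g : Mat2) (x : V3) : V3 := vec_of_sym (mul2 (tr2 g) (mul2 (sym_of_vec x) g)).

Lemma congr3_add g a b : congr3 g (vadd a b) = vadd (congr3 g a) (congr3 g b).
Proof. apply V3_eq; unfold congr3, vec_of_sym, sym_of_vec, mul2, tr2, vadd; simpl; field. Qed.

Lemma congr3_zero g : congr3 g vzero = vzero.
Proof. apply V3_eq; unfold congr3, vec_of_sym, sym_of_vec, mul2, tr2; simpl; field. Qed.

Lemma spanning_lorentz_interior n f : (forall i, (i < n)%nat -> lorentz (f i)) ->
  spanning3 n f -> let s := vsum n f in x1 s * x1 s + x2 s * x2 s < x0 s * x0 s.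
Proof.
  intros Hf Hspan s.
  destruct (Rlt_le_dec (x1 s * x1 s + x2 s * x2 s) (x0 s * x0 s)) as [|Hbd]; [assumption|exfalso].
  destruct (lorentz_vsum n f Hf) as [Hs0 Hs]; fold s in Hs0, Hs.
  (* the mirror image of s is in the cone and orthogonal to all f i, hence zero *)
  set (r := v3 (x0 s) (- x1 s) (- x2 s)).
  assert (Hr : lorentz r) by (unfold lorentz, r; cbn [x0 x1 x2]; split; nra).
  assert (Hrf : forall i, (i < n)%nat -> dot3 (f i) r = 0).
  { intros i Hi.
    assert (Hsum : fsum n (fun i => dot3 r (f i)) = 0).
    { rewrite <- dot3_vsum; fold s; unfold r, dot3; cbn [x0 x1 x2]; apply Rle_antisym; nra. }
    rewrite <- (fsum_ge0_eq0 n _ (fun i Hi => lorentz_dot_ge0 r (f i) Hr (Hf i Hi)) Hsum i Hi).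
    unfold dot3; ring. }
  assert (Hs00 : x0 s = 0) by (pose proof (Hspan r Hrf) as H0; injection H0; auto).
  assert (He0 : forall i, (i < n)%nat -> dot3 (f i) e0 = 0).
  { intros i Hi.
    assert (Hsum : fsum n (fun i => x0 (f i)) = 0) by exact Hs00.
    pose proof (fsum_ge0_eq0 n _ (fun i Hi => proj1 (Hf i Hi)) Hsum i Hi).
    unfold dot3, e0; simpl; lra. }
  pose proof (Hspan e0 He0) as H0; injection H0; lra.
Qed.

(* g is the inverse of the Cholesky factor of [sym_of_vec s] *)
Lemma congr3_to_e0 s : 0 <= x0 s -> x1 s * x1 s + x2 s * x2 s < x0 s * x0 s ->
  exists g, GL2 g /\ congr3 g s = e0.
Proof.
  intros Hs0 Hint.
  assert (Ha : 0 < x0 s + x1 s) by nra.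
  set (d := (x0 s + x1 s) * (x0 s - x1 s) - x2 s * x2 s).
  assert (Hd : 0 < d) by (unfold d; nra).
  set (ra := sqrt (x0 s + x1 s)); set (rd := sqrt d); set (b := x2 s).
  assert (Hra : 0 < ra) by (apply sqrt_lt_R0; exact Ha).
  assert (Hrd : 0 < rd) by (apply sqrt_lt_R0; exact Hd).
  assert (Era : ra * ra = x0 s + x1 s) by (apply sqrt_sqrt; lra).
  assert (Erd : rd * rd = d) by (apply sqrt_sqrt; lra).
  assert (Hs : s = v3 ((ra * ra + (rd * rd + b * b) / (ra * ra)) / 2)
                      ((ra * ra - (rd * rd + b * b) / (ra * ra)) / 2) b).
  { assert (Hm : x0 s - x1 s = (rd * rd + b * b) / (ra * ra))
      by (rewrite Erd, Era; unfold d, b; field; lra).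
    apply V3_eq; cbn [x0 x1 x2]; [| |reflexivity]; rewrite <- Hm, Era; field. }
  exists (mk2 (1 / ra) (- b / (ra * rd)) 0 (ra / rd)); split.
  - unfold GL2, det2; simpl.
    replace (1 / ra * (ra / rd) - - b / (ra * rd) * 0) with (/ rd) by (field; lra).
    apply Rinv_neq_0_compat; lra.
  - rewrite Hs; apply V3_eq; unfold congr3, vec_of_sym, sym_of_vec, mul2, tr2, e0; simpl;
      field; lra.
Qed.

Lemma SF_normalize p q M A B : SF p q M (A, B) -> spanning3 p (fun i => vec_of_sym (A i)) ->
  exists g, GL2 g /\ vsum p (fun i => vec_of_sym (fst (act g (A, B)) i)) = e0.
Proof.
  intros HS Hspan; pose proof HS as (HA & _).
  assert (Hf : forall i, (i < p)%nat -> lorentz (vec_of_sym (A i)))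
    by (intros; apply psd2_lorentz; auto).
  destruct (lorentz_vsum p _ Hf) as [Hs0 _].
  destruct (congr3_to_e0 _ Hs0 (spanning_lorentz_interior p _ Hf Hspan)) as [g [Hg Hge0]].
  exists g; split; [exact Hg|].
  rewrite <- Hge0, (vsum_additive (congr3 g)) by (apply congr3_zero || apply congr3_add).
  apply vsum_ext; intros i Hi; simpl; unfold congr3.
  rewrite sym_of_vecK by (apply psd2_sym; auto); reflexivity.
Qed.

(** * Two normalized factorizations differ by a map fixing e0 *)

Definition mul3 (B C : M3) : M3 := m3 (mv3 B (col0 C)) (mv3 B (col1 C)) (mv3 B (col2 C)).
Definition inv3 (B : M3) : M3 := m3 (solve3 B (v3 1 0 0)) (solve3 B (v3 0 1 0)) (solve3 B (v3 0 0 1)).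

Lemma mv3_mul3 B C y : mv3 (mul3 B C) y = mv3 B (mv3 C y).
Proof. apply V3_eq; unfold mul3, mv3; simpl; ring. Qed.

Lemma mv3_inv3 B y : det3 B <> 0 -> mv3 (inv3 B) y = solve3 B y.
Proof.
  destruct B as [[a0 a1 a2] [b0 b1 b2] [c0 c1 c2]]; unfold inv3, solve3, mv3, det3, cross, dot3.
  simpl; intros H; apply V3_eq; simpl; field; exact H.
Qed.

Definition mxv1 (X : Mat2) (y1 y2 : R) : R := e11 X * y1 + e12 X * y2.
Definition mxv2 (X : Mat2) (y1 y2 : R) : R := e21 X * y1 + e22 X * y2.

Definition transfer (a1 a2 : R) (N : Mat2) (x : V3) : V3 :=
  v3 (x0 x + a1 * x1 x + a2 * x2 x) (mxv1 N (x1 x) (x2 x)) (mxv2 N (x1 x) (x2 x)).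
Definition transfer_adj (a1 a2 : R) (N : Mat2) (y : V3) : V3 :=
  v3 (x0 y) (a1 * x0 y + mxv1 (tr2 N) (x1 y) (x2 y)) (a2 * x0 y + mxv2 (tr2 N) (x1 y) (x2 y)).

Lemma mtv3_fixing_e0 F : mtv3 F e0 = e0 -> exists a1 a2 N,
  (forall x, mtv3 F x = transfer a1 a2 N x) /\ (forall y, mv3 F y = transfer_adj a1 a2 N y).
Proof.
  destruct F as [[c00 c01 c02] [c10 c11 c12] [c20 c21 c22]]; unfold mtv3, e0, dot3; simpl.
  intros He; injection He; intros H2 H1 H0.
  replace c00 with 1 by lra; replace c10 with 0 by lra; replace c20 with 0 by lra.
  exists c01, c02, (mk2 c11 c12 c21 c22); split; intros;
    apply V3_eq; unfold transfer, transfer_adj, mxv1, mxv2, mv3, dot3; simpl; ring.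
Qed.

Section Transfer.
Variables (p q : nat) (M : nat -> nat -> R) (j1 j2 j3 : nat).
Hypothesis Hind : cols_indep p M (j1 :: j2 :: j3 :: nil).
Hypotheses (Hj1 : (j1 < q)%nat) (Hj2 : (j2 < q)%nat) (Hj3 : (j3 < q)%nat).

Lemma SF_linear_relation A B A' B' : SF p q M (A, B) -> SF p q M (A', B') ->
  exists F, (forall i, (i < p)%nat -> vec_of_sym (A' i) = mtv3 F (vec_of_sym (A i))) /\
            (forall j, (j < q)%nat -> vec_of_sym (B j) = mv3 F (vec_of_sym (B' j))).
Proof.
  intros HS HS'.
  set (C := colmat j1 j2 j3 B); set (C' := colmat j1 j2 j3 B').
  assert (HC' : det3 C' <> 0) by exact (det3_colmat p q M j1 j2 j3 Hind Hj1 Hj2 Hj3 A' B' HS').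
  exists (mul3 C (inv3 C')).
  assert (Hcol : forall k, (k < 3)%nat -> let j := nth k (j1 :: j2 :: j3 :: nil) O in
            (j < q)%nat /\ mv3 (mul3 C (inv3 C')) (vec_of_sym (B' j)) = vec_of_sym (B j)).
  { intros k Hk; cbv zeta.
    assert (Hk' : exists e, vec_of_sym (B' (nth k (j1 :: j2 :: j3 :: nil) O)) = mv3 C' e /\
                            vec_of_sym (B (nth k (j1 :: j2 :: j3 :: nil) O)) = mv3 C e).
    { destruct k as [|[|[|]]]; [exists (v3 1 0 0) | exists (v3 0 1 0) | exists (v3 0 0 1) | lia];
        split; apply V3_eq; unfold mv3, C, C', colmat; simpl; ring. }
    destruct Hk' as [e [He' He]].
    split; [destruct k as [|[|[|]]]; simpl; auto; lia|].
    rewrite mv3_mul3, mv3_inv3, He', solve3_mv3, He by exact HC'; reflexivity. }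
  assert (HA : forall i, (i < p)%nat ->
            vec_of_sym (A' i) = mtv3 (mul3 C (inv3 C')) (vec_of_sym (A i))).
  { intros i Hi; apply (mtv3_inj C' _ _ HC').
    assert (Hk : forall k, (k < 3)%nat -> let j := nth k (j1 :: j2 :: j3 :: nil) O in
              dot3 (vec_of_sym (B' j)) (vec_of_sym (A' i))
              = dot3 (vec_of_sym (B' j)) (mtv3 (mul3 C (inv3 C')) (vec_of_sym (A i)))).
    { intros k Hk; destruct (Hcol k Hk) as [Hj Hmv]; cbv zeta in *.
      rewrite dot3_comm, (dot3_comm _ (mtv3 _ _)), dot3_mtv3, Hmv.
      apply (Rmult_eq_reg_l 2); [|lra].
      rewrite <- (SF_entry p q M A B), <- (SF_entry p q M A' B') by assumption; reflexivity. }
    unfold mtv3 at 1 2.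
    change (col0 C') with (vec_of_sym (B' j1)); change (col1 C') with (vec_of_sym (B' j2));
      change (col2 C') with (vec_of_sym (B' j3)).
    pose proof (Hk 0%nat ltac:(lia)) as E0; pose proof (Hk 1%nat ltac:(lia)) as E1;
      pose proof (Hk 2%nat ltac:(lia)) as E2; cbv zeta beta iota delta [nth] in E0, E1, E2.
    rewrite E0, E1, E2; reflexivity. }
  split; [exact HA|].
  intros j Hj; apply (spanning3_eq p _ _ _ (SF_spanning_A p q M j1 j2 j3 Hind Hj1 Hj2 Hj3 A B HS)).
  intros i Hi; rewrite <- dot3_mtv3, <- HA by exact Hi.
  apply (Rmult_eq_reg_l 2); [|lra].
  rewrite <- (SF_entry p q M A B), <- (SF_entry p q M A' B') by assumption; reflexivity.
Qed.

Lemma SF_transfer A B A' B' : SF p q M (A, B) -> SF p q M (A', B') ->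
  vsum p (fun i => vec_of_sym (A i)) = e0 -> vsum p (fun i => vec_of_sym (A' i)) = e0 ->
  exists a1 a2 N,
    (forall i, (i < p)%nat -> vec_of_sym (A' i) = transfer a1 a2 N (vec_of_sym (A i))) /\
    (forall j, (j < q)%nat -> vec_of_sym (B j) = transfer_adj a1 a2 N (vec_of_sym (B' j))).
Proof.
  intros HS HS' Hsum Hsum'.
  destruct (SF_linear_relation A B A' B' HS HS') as [F [HA HB]].
  assert (HF : mtv3 F e0 = e0).
  { rewrite <- Hsum at 1; rewrite <- Hsum'.
    rewrite (vsum_additive (mtv3 F)) by (apply mtv3_zero || apply mtv3_add).
    apply vsum_ext; intros i Hi; symmetry; apply HA, Hi. }
  destruct (mtv3_fixing_e0 F HF) as (a1 & a2 & N & HFt & HFa).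
  exists a1, a2, N; split; intros.
  - rewrite <- HFt; auto.
  - rewrite <- HFa; auto.
Qed.

End Transfer.

(** * Square roots of positive definite 2x2 matrices *)

(* By Cayley-Hamilton, (X + s I)^2 = (tr X + 2 s) X when s^2 = det X. *)
Definition sqrt_sym2 (a b c : R) : Mat2 :=
  let s := sqrt (a * c - b * b) in
  let t := sqrt (a + c + 2 * s) in
  mk2 ((a + s) / t) (b / t) (b / t) ((c + s) / t).

Lemma sqrt_sym2_spec a b c : 0 < a -> 0 < c -> 0 < a * c - b * b ->
  let Rt := sqrt_sym2 a b c in
  e21 Rt = e12 Rt /\
  e11 Rt * e11 Rt + e12 Rt * e12 Rt = a /\
  e12 Rt * (e11 Rt + e22 Rt) = b /\
  e12 Rt * e12 Rt + e22 Rt * e22 Rt = c /\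
  0 < det2 Rt.
Proof.
  intros Ha Hc Hd; unfold sqrt_sym2, det2; cbn [e11 e12 e21 e22].
  set (s := sqrt (a * c - b * b)); set (t := sqrt (a + c + 2 * s)).
  assert (Hs : 0 < s) by (apply sqrt_lt_R0; exact Hd).
  assert (Es : s * s = a * c - b * b) by (apply sqrt_sqrt; lra).
  assert (Ht : 0 < t) by (apply sqrt_lt_R0; lra).
  assert (Et : t * t = a + c + 2 * s) by (apply sqrt_sqrt; lra).
  repeat split.
  - replace (((a + s) / t) * ((a + s) / t) + (b / t) * (b / t))
      with (((a + s) * (a + s) + b * b) / (t * t)) by (field; lra).
    replace ((a + s) * (a + s) + b * b) with (a * (t * t)) by (rewrite Et; nra).
    field; lra.
  - replace ((b / t) * ((a + s) / t + (c + s) / t)) with ((b * (a + c + 2 * s)) / (t * t))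
      by (field; lra).
    rewrite <- Et; field; lra.
  - replace ((b / t) * (b / t) + ((c + s) / t) * ((c + s) / t))
      with (((c + s) * (c + s) + b * b) / (t * t)) by (field; lra).
    replace ((c + s) * (c + s) + b * b) with (c * (t * t)) by (rewrite Et; nra).
    field; lra.
  - replace ((a + s) / t * ((c + s) / t) - b / t * (b / t))
      with (((a + s) * (c + s) - b * b) / (t * t)) by (field; lra).
    replace ((a + s) * (c + s) - b * b) with (s * (t * t)) by (rewrite Et; nra).
    replace (s * (t * t) / (t * t)) with s by (field; lra); exact Hs.
Qed.

(* Test the hypothesis with y = R^-2 c. *)
Lemma mxv_inv_norm_le Rm b0 c1 c2 : e21 Rm = e12 Rm -> det2 Rm <> 0 -> 0 <= b0 ->
  (forall y1 y2, (c1 * y1 + c2 * y2) * (c1 * y1 + c2 * y2) <=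
     b0 * b0 * (mxv1 Rm y1 y2 * mxv1 Rm y1 y2 + mxv2 Rm y1 y2 * mxv2 Rm y1 y2)) ->
  mxv1 (inv2 Rm) c1 c2 * mxv1 (inv2 Rm) c1 c2 + mxv2 (inv2 Rm) c1 c2 * mxv2 (inv2 Rm) c1 c2
    <= b0 * b0.
Proof.
  intros Hsym Hdet Hb0 Hbound.
  set (w1 := mxv1 (inv2 Rm) c1 c2); set (w2 := mxv2 (inv2 Rm) c1 c2).
  specialize (Hbound (mxv1 (inv2 Rm) w1 w2) (mxv2 (inv2 Rm) w1 w2)).
  unfold det2 in Hdet.
  replace (c1 * mxv1 (inv2 Rm) w1 w2 + c2 * mxv2 (inv2 Rm) w1 w2) with (w1 * w1 + w2 * w2)
    in Hbound by (unfold w1, w2, mxv1, mxv2, inv2, det2; cbn [e11 e12 e21 e22]; rewrite Hsym in *; field; exact Hdet).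
  replace (mxv1 Rm (mxv1 (inv2 Rm) w1 w2) (mxv2 (inv2 Rm) w1 w2)) with w1 in Hbound
    by (unfold mxv1, mxv2, inv2, det2; cbn [e11 e12 e21 e22]; field; exact Hdet).
  replace (mxv2 Rm (mxv1 (inv2 Rm) w1 w2) (mxv2 (inv2 Rm) w1 w2)) with w2 in Hbound
    by (unfold mxv1, mxv2, inv2, det2; cbn [e11 e12 e21 e22]; field; exact Hdet).
  set (W := w1 * w1 + w2 * w2) in *.
  assert (0 <= W) by (unfold W; nra).
  destruct (Req_dec W 0) as [HW|HW]; [nra|].
  apply (Rmult_le_reg_r W); nra.
Qed.

(** * The interpolating path *)

Section Interpolation.
Variables (a1 a2 : R) (N : Mat2).

Definition s11 t := (1 - t) + t * (e11 N * e11 N + e21 N * e21 N) - t * (1 - t) * (a1 * a1).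
Definition s12 t := t * (e11 N * e12 N + e21 N * e22 N) - t * (1 - t) * (a1 * a2).
Definition s22 t := (1 - t) + t * (e12 N * e12 N + e22 N * e22 N) - t * (1 - t) * (a2 * a2).
Definition quadS t y1 y2 := s11 t * y1 * y1 + 2 * s12 t * y1 * y2 + s22 t * y2 * y2.
Definition posdefS t : Prop := 0 < s11 t /\ 0 < s22 t /\ 0 < s11 t * s22 t - s12 t * s12 t.
Definition sqrtS t : Mat2 := sqrt_sym2 (s11 t) (s12 t) (s22 t).

Definition shear1 t y := x1 y - x0 y * t * a1.
Definition shear2 t y := x2 y - x0 y * t * a2.

(* phi t is the identity at t = 0 and agrees with [transfer a1 a2 N] up to an orthogonal
   map at t = 1; psi t is its inverse adjoint. *)
Definition phi t x : V3 :=
  v3 (x0 x + t * (a1 * x1 x + a2 * x2 x))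
     (mxv1 (sqrtS t) (x1 x) (x2 x)) (mxv2 (sqrtS t) (x1 x) (x2 x)).
Definition psi t y : V3 :=
  v3 (x0 y) (mxv1 (inv2 (sqrtS t)) (shear1 t y) (shear2 t y))
     (mxv2 (inv2 (sqrtS t)) (shear1 t y) (shear2 t y)).

Lemma sqrtS_spec t : posdefS t ->
  e21 (sqrtS t) = e12 (sqrtS t) /\
  e11 (sqrtS t) * e11 (sqrtS t) + e12 (sqrtS t) * e12 (sqrtS t) = s11 t /\
  e12 (sqrtS t) * (e11 (sqrtS t) + e22 (sqrtS t)) = s12 t /\
  e12 (sqrtS t) * e12 (sqrtS t) + e22 (sqrtS t) * e22 (sqrtS t) = s22 t /\
  0 < det2 (sqrtS t).
Proof. intros (H11 & H22 & Hdet); exact (sqrt_sym2_spec _ _ _ H11 H22 Hdet). Qed.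

Lemma quadS_sqrtS t y1 y2 : posdefS t ->
  quadS t y1 y2 = mxv1 (sqrtS t) y1 y2 * mxv1 (sqrtS t) y1 y2
                  + mxv2 (sqrtS t) y1 y2 * mxv2 (sqrtS t) y1 y2.
Proof.
  intros HS; destruct (sqrtS_spec t HS) as (Hsym & E11 & E12 & E22 & _).
  unfold quadS, mxv1, mxv2; rewrite Hsym, <- E11, <- E12, <- E22; ring.
Qed.

Lemma quadS_interpolation t u y1 y2 :
  (u + t * (a1 * y1 + a2 * y2)) * (u + t * (a1 * y1 + a2 * y2)) - quadS t y1 y2 =
  (1 - t) * (u * u - (y1 * y1 + y2 * y2)) +
  t * ((u + a1 * y1 + a2 * y2) * (u + a1 * y1 + a2 * y2)
       - (mxv1 N y1 y2 * mxv1 N y1 y2 + mxv2 N y1 y2 * mxv2 N y1 y2)).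
Proof. unfold quadS, s11, s12, s22, mxv1, mxv2; ring. Qed.

Lemma shear_quadS_interpolation t y y1 y2 :
  (shear1 t y * y1 + shear2 t y * y2) * (shear1 t y * y1 + shear2 t y * y2)
    - x0 y * x0 y * quadS t y1 y2 =
  (1 - t) * ((x1 y * y1 + x2 y * y2) * (x1 y * y1 + x2 y * y2)
             - x0 y * x0 y * (y1 * y1 + y2 * y2)) +
  t * (((x1 y - x0 y * a1) * y1 + (x2 y - x0 y * a2) * y2)
         * ((x1 y - x0 y * a1) * y1 + (x2 y - x0 y * a2) * y2)
       - x0 y * x0 y * (mxv1 N y1 y2 * mxv1 N y1 y2 + mxv2 N y1 y2 * mxv2 N y1 y2)).
Proof. unfold shear1, shear2, quadS, s11, s12, s22, mxv1, mxv2; ring. Qed.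

Lemma phi_lorentz t x : 0 <= t <= 1 -> posdefS t ->
  lorentz x -> lorentz (transfer a1 a2 N x) -> lorentz (phi t x).
Proof.
  intros Ht HS [Hx0 Hx] [Hy0 Hy]; unfold transfer, phi, lorentz in *; cbn [x0 x1 x2] in *.
  split; [nra|].
  rewrite <- quadS_sqrtS by exact HS.
  pose proof (quadS_interpolation t (x0 x) (x1 x) (x2 x)).
  assert (0 <= (1 - t) * (x0 x * x0 x - (x1 x * x1 x + x2 x * x2 x))) by (apply Rmult_le_pos; lra).
  assert (0 <= t * ((x0 x + a1 * x1 x + a2 * x2 x) * (x0 x + a1 * x1 x + a2 * x2 x)
     - (mxv1 N (x1 x) (x2 x) * mxv1 N (x1 x) (x2 x) + mxv2 N (x1 x) (x2 x) * mxv2 N (x1 x) (x2 x))))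
    by (apply Rmult_le_pos; lra).
  lra.
Qed.

Lemma shear_quadS_bound t y y' : 0 <= t <= 1 -> lorentz y -> lorentz y' ->
  y = transfer_adj a1 a2 N y' -> forall y1 y2,
  (shear1 t y * y1 + shear2 t y * y2) * (shear1 t y * y1 + shear2 t y * y2)
    <= x0 y * x0 y * quadS t y1 y2.
Proof.
  intros Ht Hy Hy' Hyy' y1 y2.
  pose proof (shear_quadS_interpolation t y y1 y2) as E.
  pose proof (lorentz_dot_bound y y1 y2 Hy) as T0.
  assert (T1 : ((x1 y - x0 y * a1) * y1 + (x2 y - x0 y * a2) * y2)
                 * ((x1 y - x0 y * a1) * y1 + (x2 y - x0 y * a2) * y2)
               <= x0 y * x0 y * (mxv1 N y1 y2 * mxv1 N y1 y2 + mxv2 N y1 y2 * mxv2 N y1 y2)).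
  { rewrite Hyy'; unfold transfer_adj; cbn [x0 x1 x2].
    replace ((a1 * x0 y' + mxv1 (tr2 N) (x1 y') (x2 y') - x0 y' * a1) * y1 +
             (a2 * x0 y' + mxv2 (tr2 N) (x1 y') (x2 y') - x0 y' * a2) * y2)
      with (x1 y' * mxv1 N y1 y2 + x2 y' * mxv2 N y1 y2) by (unfold mxv1, mxv2, tr2; simpl; ring).
    apply lorentz_dot_bound, Hy'. }
  assert (0 <= (1 - t) * (x0 y * x0 y * (y1 * y1 + y2 * y2)
                - (x1 y * y1 + x2 y * y2) * (x1 y * y1 + x2 y * y2))) by (apply Rmult_le_pos; lra).
  assert (0 <= t * (x0 y * x0 y * (mxv1 N y1 y2 * mxv1 N y1 y2 + mxv2 N y1 y2 * mxv2 N y1 y2)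
                - ((x1 y - x0 y * a1) * y1 + (x2 y - x0 y * a2) * y2)
                  * ((x1 y - x0 y * a1) * y1 + (x2 y - x0 y * a2) * y2))) by (apply Rmult_le_pos; lra).
  lra.
Qed.

Lemma psi_lorentz t y y' : 0 <= t <= 1 -> posdefS t -> lorentz y -> lorentz y' ->
  y = transfer_adj a1 a2 N y' -> lorentz (psi t y).
Proof.
  intros Ht HS Hy Hy' Hyy'.
  destruct (sqrtS_spec t HS) as (Hsym & _ & _ & _ & Hdet).
  split; [exact (proj1 Hy)|]; unfold psi; cbn [x0 x1 x2].
  apply mxv_inv_norm_le; [exact Hsym | lra | exact (proj1 Hy) |].
  intros y1 y2; rewrite <- quadS_sqrtS by exact HS.
  apply (shear_quadS_bound t y y'); assumption.
Qed.

Lemma dot3_phi_psi t x y : posdefS t -> dot3 (phi t x) (psi t y) = dot3 x y.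
Proof.
  intros HS; destruct (sqrtS_spec t HS) as (Hsym & _ & _ & _ & Hdet).
  unfold dot3, phi, psi, shear1, shear2, mxv1, mxv2, inv2; cbn [x0 x1 x2 e11 e12 e21 e22].
  unfold det2 in *; rewrite Hsym in *; field; lra.
Qed.

Lemma posdefS_of_quadS t : (forall y1 y2, ~ (y1 = 0 /\ y2 = 0) -> 0 < quadS t y1 y2) ->
  posdefS t.
Proof.
  intros H; unfold quadS in H.
  assert (H11 : 0 < s11 t) by (pose proof (H 1 0 ltac:(lra)); nra).
  assert (H22 : 0 < s22 t) by (pose proof (H 0 1 ltac:(lra)); nra).
  split; [exact H11|split; [exact H22|]].
  pose proof (H (s12 t) (- s11 t) ltac:(lra)) as H'.
  apply (Rmult_lt_reg_l (s11 t)); [exact H11|].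
  replace (s11 t * (s11 t * s22 t - s12 t * s12 t))
    with (s11 t * s12 t * s12 t + 2 * s12 t * s12 t * - s11 t + s22 t * - s11 t * - s11 t)
    by ring.
  lra.
Qed.

(* A kernel vector y of S t would make (-t a.y, y) orthogonal to every y_j. *)
Lemma posdefS_of_spanning q (ys ys' : nat -> V3) t :
  (forall j, (j < q)%nat -> lorentz (ys j) /\ lorentz (ys' j) /\
                            ys j = transfer_adj a1 a2 N (ys' j)) ->
  spanning3 q ys -> 0 <= t <= 1 -> posdefS t.
Proof.
  intros Hys Hspan Ht; apply posdefS_of_quadS; intros y1 y2 Hy.
  destruct (Rlt_le_dec 0 (quadS t y1 y2)) as [|Hle]; [assumption|exfalso].
  assert (Z : v3 (- (t * (a1 * y1 + a2 * y2))) y1 y2 = vzero).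
  { apply Hspan; intros j Hj; destruct (Hys j Hj) as (Hy1 & Hy2 & Hyy').
    pose proof (shear_quadS_bound t (ys j) (ys' j) Ht Hy1 Hy2 Hyy' y1 y2).
    assert (x0 (ys j) * x0 (ys j) * quadS t y1 y2 <= 0)
      by (pose proof (Rle_0_sqr (x0 (ys j))); unfold Rsqr in *; nra).
    assert (shear1 t (ys j) * y1 + shear2 t (ys j) * y2 = 0) by nra.
    unfold dot3, shear1, shear2 in *; cbn [x0 x1 x2]; nra. }
  injection Z; intros; apply Hy; split; assumption.
Qed.

Lemma sqrtS_0 : sqrtS 0 = mk2 1 0 0 1.
Proof.
  unfold sqrtS, sqrt_sym2, s11, s12, s22.
  replace ((1 - 0) + 0 * (e11 N * e11 N + e21 N * e21 N) - 0 * (1 - 0) * (a1 * a1)) with 1 by ring.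
  replace ((1 - 0) + 0 * (e12 N * e12 N + e22 N * e22 N) - 0 * (1 - 0) * (a2 * a2)) with 1 by ring.
  replace (0 * (e11 N * e12 N + e21 N * e22 N) - 0 * (1 - 0) * (a1 * a2)) with 0 by ring.
  replace (1 * 1 - 0 * 0) with 1 by ring; rewrite sqrt_1.
  replace (1 + 1 + 2 * 1) with (2 * 2) by ring; rewrite sqrt_square by lra.
  apply Mat2_eq; simpl; field.
Qed.

Lemma phi_0 x : phi 0 x = x.
Proof. unfold phi, mxv1, mxv2; rewrite sqrtS_0; apply V3_eq; simpl; ring. Qed.

Lemma psi_0 y : psi 0 y = y.
Proof.
  unfold psi, shear1, shear2, mxv1, mxv2, inv2, det2; rewrite sqrtS_0.
  apply V3_eq; simpl; field.
Qed.

End Interpolation.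

(** * The endpoint t = 1 *)

Definition id2 : Mat2 := mk2 1 0 0 1.

Lemma mul2A X Y Z : mul2 X (mul2 Y Z) = mul2 (mul2 X Y) Z.
Proof. apply Mat2_eq; unfold mul2; simpl; ring. Qed.
Lemma mul12 X : mul2 id2 X = X.
Proof. apply Mat2_eq; unfold mul2, id2; simpl; ring. Qed.
Lemma mul21 X : mul2 X id2 = X.
Proof. apply Mat2_eq; unfold mul2, id2; simpl; ring. Qed.
Lemma mulV2 X : det2 X <> 0 -> mul2 (inv2 X) X = id2.
Proof. unfold det2; intros; apply Mat2_eq; unfold mul2, inv2, id2, det2; simpl; field; auto. Qed.
Lemma mul2V X : det2 X <> 0 -> mul2 X (inv2 X) = id2.
Proof. unfold det2; intros; apply Mat2_eq; unfold mul2, inv2, id2, det2; simpl; field; auto. Qed.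
Lemma tr2_mul X Y : tr2 (mul2 X Y) = mul2 (tr2 Y) (tr2 X).
Proof. apply Mat2_eq; unfold mul2, tr2; simpl; ring. Qed.
Lemma tr2_inv X : tr2 (inv2 X) = inv2 (tr2 X).
Proof.
  apply Mat2_eq; unfold tr2, inv2, det2; simpl; try ring;
    unfold Rdiv; f_equal; f_equal; ring.
Qed.
Lemma det2_tr X : det2 (tr2 X) = det2 X.
Proof. unfold det2, tr2; simpl; ring. Qed.

Lemma orthogonal2_cases O : mul2 (tr2 O) O = id2 ->
  e11 O * e11 O + e12 O * e12 O = 1 /\
  ((e21 O = - e12 O /\ e22 O = e11 O) \/ (e21 O = e12 O /\ e22 O = - e11 O)).
Proof.
  destruct O as [o11 o12 o21 o22]; unfold mul2, tr2, id2; simpl; intros HO.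
  injection HO; intros H4 H3 H2 H1.
  set (k := o11 * o22 - o12 * o21).
  assert (Ek : k * k = 1).
  { unfold k; transitivity ((o11 * o11 + o21 * o21) * (o12 * o12 + o22 * o22)
                            - (o11 * o12 + o21 * o22) * (o11 * o12 + o21 * o22)); [ring|].
    rewrite H1, H4, H2; ring. }
  assert (E1 : k * o11 = o22).
  { unfold k; transitivity (o11 * o11 * o22 - o11 * o12 * o21); [ring|].
    replace (o11 * o12) with (- (o21 * o22)) by lra.
    transitivity (o22 * (o11 * o11 + o21 * o21)); [ring|]; rewrite H1; ring. }
  assert (E2 : k * o21 = - o12).
  { unfold k; transitivity (o21 * o22 * o11 - o12 * o21 * o21); [ring|].
    replace (o21 * o22) with (- (o11 * o12)) by lra.
    transitivity (- o12 * (o11 * o11 + o21 * o21)); [ring|]; rewrite H1; ring. }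
  assert (Hk : k = 1 \/ k = -1) by (destruct (Rle_lt_dec 0 k); [left|right]; nra).
  destruct Hk as [Hk|Hk]; rewrite Hk in *.
  - split; [replace o12 with (- o21) by lra; lra | left; split; lra].
  - split; [replace o12 with o21 by lra; lra | right; split; lra].
Qed.

Lemma half_angle C E : C * C + E * E = 1 ->
  exists c s, c * c + s * s = 1 /\ c * c - s * s = C /\ 2 * c * s = E.
Proof.
  intros H; destruct (Req_dec C (-1)) as [->|HC1].
  - exists 0, 1; assert (E = 0) by nra; subst; repeat split; lra.
  - assert (HC : -1 < C) by (destruct (Rle_lt_dec C (-1)); [nra|lra]).
    set (c := sqrt ((1 + C) / 2)).
    assert (Hc : 0 < c) by (apply sqrt_lt_R0; lra).
    assert (Ec : c * c = (1 + C) / 2) by (apply sqrt_sqrt; lra).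
    exists c, (E / (2 * c)).
    assert (Es : (E / (2 * c)) * (E / (2 * c)) = (1 - C) / 2).
    { replace ((E / (2 * c)) * (E / (2 * c))) with ((E * E) / (4 * (c * c))) by (field; lra).
      rewrite Ec; replace (E * E) with (1 - C * C) by lra; field; lra. }
    repeat split; try lra; field; lra.
Qed.

(* Congruence by the rotation (resp. reflection) of angle theta rotates (resp. reflects)
   the traceless part (x1, x2) by the angle 2 theta. *)
Lemma orthogonal2_congr O : mul2 (tr2 O) O = id2 ->
  exists g, GL2 g /\ inv2 g = tr2 g /\ forall x,
    mul2 (tr2 g) (mul2 (sym_of_vec x) g)
    = sym_of_vec (v3 (x0 x) (mxv1 O (x1 x) (x2 x)) (mxv2 O (x1 x) (x2 x))).
Proof.
  intros HO; destruct (orthogonal2_cases O HO) as [Hn Hcases].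
  destruct (half_angle _ _ Hn) as (c & s & Hcs & HC & HE).
  destruct O as [o11 o12 o21 o22]; simpl in *.
  destruct Hcases as [[-> ->]|[-> ->]];
    [exists (mk2 c (- s) s c) | exists (mk2 c s s (- c))];
    (split; [unfold GL2, det2; simpl; lra|]);
    [assert (Hdet : det2 (mk2 c (- s) s c) = 1) by (unfold det2; simpl; lra)
    |assert (Hdet : det2 (mk2 c s s (- c)) = -1) by (unfold det2; simpl; lra)];
    (split; [apply Mat2_eq; unfold inv2; rewrite Hdet; simpl; field|]);
    intros x; apply Mat2_eq;
    unfold mul2, tr2, sym_of_vec, mxv1, mxv2; cbn [x0 x1 x2 e11 e12 e21 e22];
    rewrite <- ?HC, <- ?HE;
    assert (x0 x * (c * c + s * s) = x0 x) by (rewrite Hcs; ring); lra.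
Qed.

Section EndPoint.
Variables (a1 a2 : R) (N : Mat2).

Lemma sqrtS_1_polar : posdefS a1 a2 N 1 ->
  exists O, mul2 (tr2 O) O = id2 /\ mul2 O N = sqrtS a1 a2 N 1 /\
            mul2 (inv2 (sqrtS a1 a2 N 1)) (tr2 N) = O.
Proof.
  intros HS.
  destruct (sqrtS_spec a1 a2 N 1 HS) as (Hsym & E1 & E2 & E3 & Hdet).
  set (Rt := sqrtS a1 a2 N 1) in *.
  unfold s11, s12, s22 in E1, E2, E3.
  assert (dN : det2 N <> 0).
  { destruct HS as (_ & _ & HdS); unfold s11, s12, s22, det2 in *; intros Z.
    replace ((1 - 1) + 1 * (e11 N * e11 N + e21 N * e21 N) - 1 * (1 - 1) * (a1 * a1))
      with (e11 N * e11 N + e21 N * e21 N) in HdS by ring.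
    replace ((1 - 1) + 1 * (e12 N * e12 N + e22 N * e22 N) - 1 * (1 - 1) * (a2 * a2))
      with (e12 N * e12 N + e22 N * e22 N) in HdS by ring.
    replace (1 * (e11 N * e12 N + e21 N * e22 N) - 1 * (1 - 1) * (a1 * a2))
      with (e11 N * e12 N + e21 N * e22 N) in HdS by ring.
    replace ((e11 N * e11 N + e21 N * e21 N) * (e12 N * e12 N + e22 N * e22 N)
             - (e11 N * e12 N + e21 N * e22 N) * (e11 N * e12 N + e21 N * e22 N))
      with ((e11 N * e22 N - e12 N * e21 N) * (e11 N * e22 N - e12 N * e21 N)) in HdS by ring.
    rewrite Z in HdS; lra. }
  assert (RR : mul2 Rt Rt = mul2 (tr2 N) N).
  { apply Mat2_eq; unfold mul2, tr2; cbn [e11 e12 e21 e22]; rewrite ?Hsym; lra. }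
  assert (RT : tr2 Rt = Rt) by (apply Mat2_eq; simpl; auto).
  exists (mul2 Rt (inv2 N)); split; [|split].
  - rewrite tr2_mul, tr2_inv, RT, <- mul2A, (mul2A Rt Rt), RR, <- (mul2A (tr2 N)),
      (mul2A (inv2 (tr2 N))), mulV2 by (rewrite det2_tr; exact dN).
    rewrite mul12; apply mul2V, dN.
  - rewrite <- mul2A, mulV2 by exact dN; apply mul21.
  - rewrite <- (mul21 (tr2 N)), <- (mul2V N dN), (mul2A (tr2 N)), <- RR, !mul2A,
      mulV2 by lra.
    rewrite mul12; reflexivity.
Qed.

Lemma phi_psi_1 : posdefS a1 a2 N 1 -> exists g, GL2 g /\
  (forall x, mul2 (tr2 g) (mul2 (sym_of_vec (transfer a1 a2 N x)) g)
             = sym_of_vec (phi a1 a2 N 1 x)) /\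
  (forall y, mul2 (inv2 g) (mul2 (sym_of_vec y) (tr2 (inv2 g)))
             = sym_of_vec (psi a1 a2 N 1 (transfer_adj a1 a2 N y))).
Proof.
  intros HS; destruct (sqrtS_1_polar HS) as (O & HO & HON & HRN).
  destruct (sqrtS_spec a1 a2 N 1 HS) as (_ & _ & _ & _ & Hdet).
  destruct (orthogonal2_congr O HO) as (g & Hg & Hinv & Hact).
  exists g; split; [exact Hg|split].
  - intros x; rewrite Hact; f_equal.
    unfold transfer, phi; rewrite <- HON; apply V3_eq; unfold mxv1, mxv2, mul2; simpl; ring.
  - intros y; rewrite Hinv, tr2K, Hact; f_equal.
    unfold psi, transfer_adj, shear1, shear2; rewrite <- HRN.
    apply V3_eq; unfold mxv1, mxv2, mul2, tr2; cbn [x0 x1 x2 e11 e12 e21 e22]; ring.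
Qed.

End EndPoint.

(** * Continuity *)

Lemma continuity_pt_cst c x : continuity_pt (fun _ => c) x.
Proof. apply continuity_pt_const; intros ? ?; reflexivity. Qed.

Lemma continuity_pt_idR x : continuity_pt (fun t => t) x.
Proof. apply derivable_continuous_pt, derivable_pt_id. Qed.

Lemma continuity_pt_sqrt_comp f x : continuity_pt f x -> 0 <= f x ->
  continuity_pt (fun t => sqrt (f t)) x.
Proof. intros Hf Hx; apply (continuity_pt_comp f sqrt x Hf), continuity_pt_sqrt, Hx. Qed.

Lemma continuity_pt_Rabs_comp f x : continuity_pt f x -> continuity_pt (fun t => Rabs (f t)) x.
Proof. intros Hf; apply (continuity_pt_comp f Rabs x Hf), Rcontinuity_abs. Qed.

Lemma continuity_pt_div_comp f g x : continuity_pt f x -> continuity_pt g x -> g x <> 0 ->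
  continuity_pt (fun t => f t / g t) x.
Proof. intros; apply (continuity_pt_div f g x); assumption. Qed.

Ltac continuity_pt_auto_with tac := repeat first
  [ tac | eassumption | apply continuity_pt_cst | apply continuity_pt_idR
  | apply continuity_pt_plus | apply continuity_pt_minus | apply continuity_pt_mult
  | apply continuity_pt_opp | apply continuity_pt_Rabs_comp ].
Ltac continuity_pt_auto := continuity_pt_auto_with fail.

Lemma continuity_pt_fsum n (f : R -> nat -> R) x :
  (forall k, (k < n)%nat -> continuity_pt (fun s => f s k) x) ->
  continuity_pt (fun s => fsum n (f s)) x.
Proof.
  induction n as [|n IH]; intros Hf; simpl; [apply continuity_pt_cst|].
  apply continuity_pt_plus; [apply IH; intros|]; apply Hf; lia.
Qed.

Lemma continuity_pt_eps f x : continuity_pt f x -> forall eps, 0 < eps ->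
  exists del, 0 < del /\ forall y, Rabs (y - x) < del -> Rabs (f y - f x) < eps.
Proof.
  intros Hf eps Heps; destruct (Hf eps Heps) as [del [Hdel H]].
  exists del; split; [exact Hdel|]; intros y Hy.
  destruct (Req_dec y x) as [->|Hyx]; [rewrite Rminus_diag, Rabs_R0; exact Heps|].
  apply (H y); split; [split; [exact I | intros E; apply Hyx; auto] | exact Hy].
Qed.

Section Continuity.
Variables (a1 a2 : R) (N : Mat2) (t : R).
Hypothesis HS : posdefS a1 a2 N t.

Lemma sqrtS_continuity :
  let E := fun (proj : Mat2 -> R) =>
    continuity_pt (fun s => proj (sqrtS a1 a2 N s)) t /\
    continuity_pt (fun s => proj (inv2 (sqrtS a1 a2 N s))) t in
  E e11 /\ E e12 /\ E e21 /\ E e22.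
Proof.
  destruct (sqrtS_spec a1 a2 N t HS) as (_ & _ & _ & _ & Hdet).
  pose proof HS as (P11 & P22 & Pdet).
  assert (C11 : continuity_pt (s11 a1 N) t) by (unfold s11; continuity_pt_auto).
  assert (C12 : continuity_pt (s12 a1 a2 N) t) by (unfold s12; continuity_pt_auto).
  assert (C22 : continuity_pt (s22 a2 N) t) by (unfold s22; continuity_pt_auto).
  set (sg := fun s => sqrt (s11 a1 N s * s22 a2 N s - s12 a1 a2 N s * s12 a1 a2 N s)).
  set (tau := fun s => sqrt (s11 a1 N s + s22 a2 N s + 2 * sg s)).
  assert (Hsg : 0 < sg t) by (apply sqrt_lt_R0; exact Pdet).
  assert (Htau : 0 < tau t) by (apply sqrt_lt_R0; lra).
  assert (Csg : continuity_pt sg t)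
    by (apply continuity_pt_sqrt_comp; [continuity_pt_auto | lra]).
  assert (Ctau : continuity_pt tau t)
    by (apply continuity_pt_sqrt_comp; [continuity_pt_auto | lra]).
  assert (Centries : forall f, continuity_pt f t ->
            continuity_pt (fun s => f s / tau s) t) by
    (intros f Cf; apply continuity_pt_div_comp; [exact Cf | exact Ctau | lra]).
  assert (Cdet : continuity_pt (fun s => det2 (sqrtS a1 a2 N s)) t).
  { unfold det2, sqrtS, sqrt_sym2; cbn [e11 e12 e21 e22].
    continuity_pt_auto_with ltac:(apply Centries). }
  assert (Cinv : forall f, continuity_pt f t ->
            continuity_pt (fun s => f s / det2 (sqrtS a1 a2 N s)) t) by
    (intros f Cf; apply continuity_pt_div_comp; [exact Cf | exact Cdet | lra]).
  unfold inv2, sqrtS, sqrt_sym2; cbn [e11 e12 e21 e22].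
  repeat split; continuity_pt_auto_with ltac:(first [apply Cinv | apply Centries]).
Qed.

Lemma phi_continuity x X : continuity_pt (fun s => mdist2 X (sym_of_vec (phi a1 a2 N s x))) t.
Proof.
  destruct sqrtS_continuity as ([C11 _] & [C12 _] & [C21 _] & [C22 _]).
  unfold mdist2, sym_of_vec, phi, mxv1, mxv2; cbn [x0 x1 x2 e11 e12 e21 e22].
  continuity_pt_auto.
Qed.

Lemma psi_continuity y X : continuity_pt (fun s => mdist2 X (sym_of_vec (psi a1 a2 N s y))) t.
Proof.
  destruct sqrtS_continuity as ([_ C11] & [_ C12] & [_ C21] & [_ C22]).
  unfold mdist2, sym_of_vec, psi, shear1, shear2, mxv1, mxv2; cbn [x0 x1 x2 e11 e12 e21 e22].
  continuity_pt_auto.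
Qed.

End Continuity.

(** * Connectedness of the unit interval *)

(* The supremum of the times up to which the path stays in [U] can neither lie in [U]
   (unless it is 1) nor in [V], both being relatively open. *)
Lemma path_stays_in_clopen p q (X U V : fact2 -> Prop) (gam : R -> fact2) :
  rel_open p q X U -> rel_open p q X V ->
  (forall P, X P -> U P \/ V P) -> (forall P, X P -> U P -> V P -> False) ->
  (forall t, 0 <= t <= 1 -> X (gam t)) ->
  (forall t, 0 <= t <= 1 -> forall eps, 0 < eps -> exists del, 0 < del /\
     forall s, 0 <= s <= 1 -> Rabs (s - t) < del -> fdist p q (gam t) (gam s) < eps) ->
  U (gam 0) -> U (gam 1).
Proof.
  intros HU HV Hcov Hdis HX Hc H0.
  set (E := fun t => 0 <= t <= 1 /\ forall s, 0 <= s <= t -> U (gam s)).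
  assert (HE0 : E 0) by (split; [lra|]; intros s Hs; replace s with 0 by lra; exact H0).
  destruct (completeness E) as [m [Hub Hlub]];
    [exists 1; intros t [Ht _]; lra | exists 0; exact HE0|].
  assert (Hm0 : 0 <= m) by (apply Hub, HE0).
  assert (Hm1 : m <= 1) by (apply Hlub; intros t [Ht _]; lra).
  assert (Hbelow : forall s, 0 <= s < m -> U (gam s)).
  { intros s Hs; apply NNPP; intros HnU.
    enough (m <= s) by lra.
    apply Hlub; intros e [He1 He2]; destruct (Rle_lt_dec e s) as [|Hse]; [assumption|].
    exfalso; apply HnU, He2; lra. }
  pose proof (HX m (conj Hm0 Hm1)) as HXm.
  destruct (Hcov (gam m) HXm) as [Um|Vm].
  - destruct (Req_dec m 1) as [->|Hm]; [exact Um|].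
    destruct (HU (gam m) HXm Um) as [eps [Heps Ho]].
    destruct (Hc m (conj Hm0 Hm1) eps Heps) as [del [Hdel Hd]].
    set (t1 := Rmin 1 (m + del / 2)).
    assert (Ht1 : m < t1 <= 1)
      by (unfold t1, Rmin; destruct (Rle_dec 1 (m + del / 2)); lra).
    assert (Ht1' : t1 <= m + del / 2) by apply Rmin_r.
    enough (E t1) by (pose proof (Hub t1 H); lra).
    split; [lra|]; intros s Hs.
    destruct (Rlt_le_dec s m); [apply Hbelow; lra|].
    apply Ho; [apply HX; lra|]; apply Hd; [lra|]; rewrite Rabs_right; lra.
  - exfalso.
    destruct (Req_dec m 0) as [Hm|Hm]; [subst m; exact (Hdis (gam 0) HXm H0 Vm)|].
    destruct (HV (gam m) HXm Vm) as [eps [Heps Ho]].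
    destruct (Hc m (conj Hm0 Hm1) eps Heps) as [del [Hdel Hd]].
    set (s := Rmax 0 (m - del / 2)).
    assert (Hs : 0 <= s < m) by (unfold s, Rmax; destruct (Rle_dec 0 (m - del / 2)); lra).
    assert (Hs' : m - del / 2 <= s) by apply Rmax_r.
    apply (Hdis (gam s)); [apply HX; lra | apply Hbelow; lra|].
    apply Ho; [apply HX; lra|]; apply Hd; [lra|]; rewrite Rabs_left; lra.
Qed.

(** * Joining two factorizations *)

Section Joining.
Variables (p q : nat) (M : nat -> nat -> R) (A B A' B' : nat -> Mat2) (a1 a2 : R) (N : Mat2).
Hypotheses (HS : SF p q M (A, B)) (HS' : SF p q M (A', B')).
Hypothesis HA : forall i, (i < p)%nat ->
  vec_of_sym (A' i) = transfer a1 a2 N (vec_of_sym (A i)).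
Hypothesis HB : forall j, (j < q)%nat ->
  vec_of_sym (B j) = transfer_adj a1 a2 N (vec_of_sym (B' j)).
Hypothesis Hpos : forall t, 0 <= t <= 1 -> posdefS a1 a2 N t.

Definition join_path (t : R) : fact2 :=
  (fun i => if Nat.ltb i p then sym_of_vec (phi a1 a2 N t (vec_of_sym (A i))) else zero2,
   fun j => if Nat.ltb j q then sym_of_vec (psi a1 a2 N t (vec_of_sym (B j))) else zero2).

Lemma join_path_SF t : 0 <= t <= 1 -> SF p q M (join_path t).
Proof.
  intros Ht; pose proof HS as (SA & SB & _); pose proof HS' as (SA' & SB' & _).
  unfold join_path, SF; split; [|split; [|split; [|split]]].
  - intros i Hi; rewrite (proj2 (Nat.ltb_lt i p) Hi); apply psd2_sym_of_vec.
    apply phi_lorentz; [exact Ht | apply Hpos, Ht | apply psd2_lorentz; auto |].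
    rewrite <- HA by exact Hi; apply psd2_lorentz; auto.
  - intros j Hj; rewrite (proj2 (Nat.ltb_lt j q) Hj); apply psd2_sym_of_vec.
    apply (psi_lorentz a1 a2 N t _ (vec_of_sym (B' j))); auto using psd2_lorentz.
  - intros i Hi; destruct (Nat.ltb_spec i p); [lia | reflexivity].
  - intros j Hj; destruct (Nat.ltb_spec j q); [lia | reflexivity].
  - intros i j Hi Hj; rewrite (proj2 (Nat.ltb_lt i p) Hi), (proj2 (Nat.ltb_lt j q) Hj).
    rewrite inner2_sym_of_vec, dot3_phi_psi by (apply Hpos, Ht).
    apply (SF_entry p q M A B i j HS Hi Hj).
Qed.

Lemma join_path_0 : join_path 0 = (A, B).
Proof.
  pose proof HS as (SA & SB & ZA & ZB & _).
  unfold join_path; f_equal; apply functional_extensionality.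
  - intros i; destruct (Nat.ltb_spec i p).
    + rewrite phi_0; apply sym_of_vecK, psd2_sym; auto.
    + symmetry; apply ZA; assumption.
  - intros j; destruct (Nat.ltb_spec j q).
    + rewrite psi_0; apply sym_of_vecK, psd2_sym; auto.
    + symmetry; apply ZB; assumption.
Qed.

Lemma join_path_1 : exists g, GL2 g /\ join_path 1 = act g (A', B').
Proof.
  pose proof HS' as (SA' & SB' & ZA' & ZB' & _).
  destruct (phi_psi_1 a1 a2 N (Hpos 1 ltac:(lra))) as (g & Hg & Hphi & Hpsi).
  exists g; split; [exact Hg|].
  unfold join_path, act; cbn [fst snd]; f_equal; apply functional_extensionality.
  - intros i; destruct (Nat.ltb_spec i p).
    + rewrite <- (sym_of_vecK (A' i)) by (apply psd2_sym; auto).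
      rewrite HA by assumption; symmetry; apply Hphi.
    + rewrite ZA' by assumption; apply Mat2_eq; simpl; ring.
  - intros j; destruct (Nat.ltb_spec j q).
    + rewrite <- (sym_of_vecK (B' j)) by (apply psd2_sym; auto).
      rewrite Hpsi, <- HB by assumption; reflexivity.
    + rewrite ZB' by assumption; apply Mat2_eq; simpl; ring.
Qed.

Lemma join_path_continuous t : 0 <= t <= 1 -> forall eps, 0 < eps -> exists del, 0 < del /\
  forall s, 0 <= s <= 1 -> Rabs (s - t) < del -> fdist p q (join_path t) (join_path s) < eps.
Proof.
  intros Ht eps Heps; pose proof (Hpos t Ht) as HSt.
  assert (C : continuity_pt (fun s => fdist p q (join_path t) (join_path s)) t).
  { unfold fdist, join_path; cbn [fst snd].
    apply continuity_pt_plus; apply continuity_pt_fsum; intros k Hk.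
    - destruct (Nat.ltb k p); [apply phi_continuity, HSt | apply continuity_pt_cst].
    - destruct (Nat.ltb k q); [apply psi_continuity, HSt | apply continuity_pt_cst]. }
  destruct (continuity_pt_eps _ _ C eps Heps) as [del [Hdel Hd]].
  exists del; split; [exact Hdel|]; intros s Hs Hst; specialize (Hd s Hst).
  assert (Z : fdist p q (join_path t) (join_path t) = 0).
  { unfold fdist; rewrite (fsum_ext p _ (fun _ => 0)), (fsum_ext q _ (fun _ => 0)), !fsum_const0;
      [ring| |]; intros; unfold mdist2; rewrite !Rminus_diag, Rabs_R0; ring. }
  rewrite Z, Rminus_0_r in Hd; pose proof (Rle_abs (fdist p q (join_path t) (join_path s))).
  lra.
Qed.

End Joining.

Lemma SF_join_normalized p q M j1 j2 j3 A B A' B' :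
  cols_indep p M (j1 :: j2 :: j3 :: nil) -> (j1 < q)%nat -> (j2 < q)%nat -> (j3 < q)%nat ->
  SF p q M (A, B) -> SF p q M (A', B') ->
  vsum p (fun i => vec_of_sym (A i)) = e0 -> vsum p (fun i => vec_of_sym (A' i)) = e0 ->
  exists (gam : R -> fact2) g, GL2 g /\ gam 0 = (A, B) /\ gam 1 = act g (A', B') /\
    (forall t, 0 <= t <= 1 -> SF p q M (gam t)) /\
    (forall t, 0 <= t <= 1 -> forall eps, 0 < eps -> exists del, 0 < del /\
       forall s, 0 <= s <= 1 -> Rabs (s - t) < del -> fdist p q (gam t) (gam s) < eps).
Proof.
  intros Hind Hj1 Hj2 Hj3 HS HS' Hsum Hsum'.
  destruct (SF_transfer p q M j1 j2 j3 Hind Hj1 Hj2 Hj3 A B A' B' HS HS' Hsum Hsum')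
    as (a1 & a2 & N & HA & HB).
  pose proof HS as (_ & SB & _); pose proof HS' as (_ & SB' & _).
  assert (Hpos : forall t, 0 <= t <= 1 -> posdefS a1 a2 N t).
  { intros t Ht; apply (posdefS_of_spanning a1 a2 N q (fun j => vec_of_sym (B j))
                          (fun j => vec_of_sym (B' j))); [| |exact Ht].
    - intros j Hj; repeat split; try apply psd2_lorentz; auto.
    - exact (SF_spanning_B p q M j1 j2 j3 Hind Hj1 Hj2 Hj3 A B HS). }
  destruct (join_path_1 p q M A B A' B' a1 a2 N HS' HA HB Hpos) as (g & Hg & H1).
  exists (join_path p q A B a1 a2 N), g.
  split; [exact Hg|split; [exact (join_path_0 p q M A B a1 a2 N HS)|split; [exact H1|split]]].
  - exact (join_path_SF p q M A B A' B' a1 a2 N HS HS' HA HB Hpos).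
  - exact (join_path_continuous p q A B a1 a2 N Hpos).
Qed.

Theorem proposition7p9 (p q : nat) (M : nat -> nat -> R) :
  nonneg_mat p q M ->
  psd_rank_eq p q M 2 ->
  rank_eq p q M 3 ->
  quotient_GL2_connected p q (SF p q M).
Proof.
  (* only rank M = 3 is needed *)
  intros _ _ Hrank [U [V (HU & HV & IU & IV & [[A0 B0] [HP UP]] & [[A0' B0'] [HQ VQ]] & Hcov & Hdis)]].
  destruct (rank3_columns p q M Hrank) as (j1 & j2 & j3 & Hj1 & Hj2 & Hj3 & Hind).
  destruct (SF_normalize p q M A0 B0 HP (SF_spanning_A p q M j1 j2 j3 Hind Hj1 Hj2 Hj3 _ _ HP))
    as [gP [HgP HsumP]].
  destruct (SF_normalize p q M A0' B0' HQ (SF_spanning_A p q M j1 j2 j3 Hind Hj1 Hj2 Hj3 _ _ HQ))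
    as [gQ [HgQ HsumQ]].
  pose proof (SF_act p q M gP _ HgP HP) as HP1; pose proof (IU gP _ HgP UP) as UP1.
  pose proof (SF_act p q M gQ _ HgQ HQ) as HQ1; pose proof (IV gQ _ HgQ VQ) as VQ1.
  destruct (act gP (A0, B0)) as [A B]; destruct (act gQ (A0', B0')) as [A' B'].
  destruct (SF_join_normalized p q M j1 j2 j3 A B A' B' Hind Hj1 Hj2 Hj3 HP1 HQ1 HsumP HsumQ)
    as (gam & g & Hg & H0 & H1 & Hgam & Hcont).
  apply (Hdis (gam 1)); [apply Hgam; lra | |].
  - apply (path_stays_in_clopen p q (SF p q M) U V gam); auto; rewrite H0; exact UP1.
  - rewrite H1; apply IV; assumption.
Qed.
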